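(* Let $(X,\mathcal A,\mu,\mu^{\otimes2},R,I,\Pi_R,G,E_0,\eta)$ be an admissible structural model with $\eta\in[0,1)$, and assume the global decoupling condition \[\mu^{\otimes2}\big(((\Pi_R^{-1}(B)\setminus B)\times X)\cap G\big)=0\qquad\text{for all } B\in\mathcal A \text{ with } B\subseteq R.\] Then: (a) $\mu^{\otimes2}(G\setminus(R\times R))=0$, and for every $B\in\mathcal A$ with $B\subseteq R$, $\mu^{\otimes2}((B\times X)\cap G)=\mu^{\otimes2}((B\times R)\cap(G\cap(R\times R)))$; (b) for every $B\in\mathcal A$ with $B\subseteq R$, \[\mu^{\otimes2}((B\times X)\cap G)=\frac{\mu(B)}{1-\eta}.\]
   Context: For a nonempty set $X$, an algebra $\mathcal A\subseteq\mathcal P(X)$ contains $\varnothing,X$ and is closed under finite unions and complements. A finitely additive measure satisfies $\mu(\varnothing)=0$ and additivity on disjoint pairs. $\mathcal A\otimes\mathcal A$ is the algebra generated by rectangles $B_1\times B_2$, $B_i\in\mathcal A$. For relations, $H\circ K=\{(x,z):\exists y\,(x,y)\in H,(y,z)\in K\}$. A pre-structural datum is a tuple $(X,\mathcal A,\mu,\mu^{\otimes2},R,I,\Pi_R,G,E_0,\eta)$ where: $X$ nonempty; $\mathcal A$ an algebra on $X$; $\mu:\mathcal A\to[0,\infty)$ finitely additive; $\mu^{\otimes2}:\mathcal A\otimes\mathcal A\to[0,\infty)$ finitely additive with $\mu^{\otimes2}(B_1\times B_2)=\mu(B_1)\mu(B_2)$; $R,I\in\mathcal A$ disjoint; $\Pi_R:X\to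 R$ a map; $G\in\mathcal A\otimes\mathcal A$; $E_0\in(0,\infty)$; $\eta\in[0,1]$. Axiom I: $\Pi_R\circ\Pi_R=\Pi_R$, $\Pi_R(r)=r$ for $r\in R$, and $\Pi_R^{-1}(B)\in\mathcal A$ for $B\in\mathcal A$, $B\subseteq R$. Axiom II: $G$ reflexive, symmetric, $G\circ G=G$. Axiom III: (a) $\mu(R)+\mu(I)=E_0$; (b) $\mu(\Pi_R^{-1}(B))=\mu(B)$ for $B\in\mathcal A$, $B\subseteq R$; (c) for all $B\in\mathcal A$, $\mu^{\otimes2}((B\times X)\cap G)=\mu(B)+\eta\,\mu^{\otimes2}((\Pi_R^{-1}(B)\times X)\cap G)$. An admissible structural model is a pre-structural datum satisfying Axioms I–III. *)

From Stdlib Require Import Reals.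
Open Scope R_scope.

Definition pset (T : Type) := T -> Prop.

Section SetOps.
Context {T : Type}.
Definition sempty : pset T := fun _ => False.
Definition sfull : pset T := fun _ => True.
Definition sunion (A B : pset T) : pset T := fun x => A x \/ B x.
Definition sinter (A B : pset T) : pset T := fun x => A x /\ B x.
Definition scompl (A : pset T) : pset T := fun x => ~ A x.
Definition sdiff (A B : pset T) : pset T := fun x => A x /\ ~ B x.
Definition ssubset (A B : pset T) : Prop := forall x, A x -> B x.
Definition sdisjoint (A B : pset T) : Prop := forall x, A x -> B x -> False.
End SetOps.

Definition rect {X : Type} (B1 B2 : pset X) : pset (X * X) :=
  fun p => B1 (fst p) /\ B2 (snd p).

Definition preimage {X : Type} (f : X -> X) (B : pset X) : pset X :=
  fun x => B (f x).

Definition is_algebra {T : Type} (A : pset (pset T)) : Prop :=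
  A sempty /\ A sfull /\
  (forall B C, A B -> A C -> A (sunion B C)) /\
  (forall B, A B -> A (scompl B)).

(* Product algebra A ⊗ A: the algebra generated by rectangles B1 × B2. *)
Definition prod_algebra {X : Type} (A : pset (pset X)) : pset (pset (X * X)) :=
  fun S => forall F : pset (pset (X * X)), is_algebra F ->
    (forall B1 B2, A B1 -> A B2 -> F (rect B1 B2)) -> F S.

Definition fin_add_measure {T : Type} (A : pset (pset T)) (mu : pset T -> R) : Prop :=
  (forall B, A B -> 0 <= mu B) /\
  mu sempty = 0 /\
  (forall B C, A B -> A C -> sdisjoint B C -> mu (sunion B C) = mu B + mu C).

Definition rcomp {X : Type} (H K : pset (X * X)) : pset (X * X) :=
  fun p => exists y, H (fst p, y) /\ K (y, snd p).

Definition pre_structural_datum {X : Type} (A : pset (pset X)) (mu : pset X -> R)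
  (mu2 : pset (X * X) -> R) (Rs Is : pset X) (Pi : X -> X) (G : pset (X * X))
  (E0 eta : R) : Prop :=
  is_algebra A /\
  fin_add_measure A mu /\
  fin_add_measure (prod_algebra A) mu2 /\
  (forall B1 B2, A B1 -> A B2 -> mu2 (rect B1 B2) = mu B1 * mu B2) /\
  A Rs /\ A Is /\ sdisjoint Rs Is /\
  (forall x, Rs (Pi x)) /\              (* Pi_R : X -> R *)
  prod_algebra A G /\
  0 < E0 /\ 0 <= eta <= 1.

Definition axiom_I {X : Type} (A : pset (pset X)) (Rs : pset X) (Pi : X -> X) : Prop :=
  (forall x, Pi (Pi x) = Pi x) /\
  (forall r, Rs r -> Pi r = r) /\
  (forall B, A B -> ssubset B Rs -> A (preimage Pi B)).

Definition axiom_II {X : Type} (G : pset (X * X)) : Prop :=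
  (forall x, G (x, x)) /\
  (forall x y, G (x, y) -> G (y, x)) /\
  rcomp G G = G.

Definition axiom_III {X : Type} (A : pset (pset X)) (mu : pset X -> R)
  (mu2 : pset (X * X) -> R) (Rs Is : pset X) (Pi : X -> X) (G : pset (X * X))
  (E0 eta : R) : Prop :=
  mu Rs + mu Is = E0 /\
  (forall B, A B -> ssubset B Rs -> mu (preimage Pi B) = mu B) /\
  (forall B, A B ->
     mu2 (sinter (rect B sfull) G) =
     mu B + eta * mu2 (sinter (rect (preimage Pi B) sfull) G)).

Definition admissible_structural_model {X : Type} (A : pset (pset X))
  (mu : pset X -> R) (mu2 : pset (X * X) -> R) (Rs Is : pset X) (Pi : X -> X)
  (G : pset (X * X)) (E0 eta : R) : Prop :=
  pre_structural_datum A mu mu2 Rs Is Pi G E0 eta /\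
  axiom_I A Rs Pi /\ axiom_II G /\ axiom_III A mu mu2 Rs Is Pi G E0 eta.

(* The decoupling condition applied to B = R says that G carries no mass on
   rows outside R, since the preimage of R under Pi_R is all of X. Axiom III(c)
   for B = X \ R, whose preimage is empty, then gives mu(X \ R) = 0, so by the
   product rule every measurable subset of X x (X \ R) is null as well: this
   is part (a). For B in R the preimage of B is B plus a set whose rows carry
   no G-mass, so Axiom III(c) becomes m = mu(B) + eta m for the row mass m of
   B, and eta < 1 solves it: this is part (b). *)

From Stdlib Require Import Reals.
From Stdlib Require Import Lra Classical FunctionalExtensionality PropExtensionality.
Open Scope R_scope.

Lemma pset_ext {T : Type} (S U : pset T) : (forall x, S x <-> U x) -> S = U.
Proof.
  intro H; apply functional_extensionality; intro x.
  apply propositional_extensionality; auto.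
Qed.

Lemma algebra_inter {T : Type} (F : pset (pset T)) B C :
  is_algebra F -> F B -> F C -> F (sinter B C).
Proof.
  intros [_ [_ [HU HC]]] HB HCc.
  replace (sinter B C) with (scompl (sunion (scompl B) (scompl C))).
  - apply HC, HU; apply HC; assumption.
  - apply pset_ext; intro x; unfold scompl, sunion, sinter.
    split; [intro H; split; apply NNPP; tauto | tauto].
Qed.

Lemma algebra_diff {T : Type} (F : pset (pset T)) B C :
  is_algebra F -> F B -> F C -> F (sdiff B C).
Proof.
  intros HF HB HC.
  replace (sdiff B C) with (sinter B (scompl C)).
  - apply algebra_inter; [assumption | assumption | apply HF; assumption].
  - apply pset_ext; intro x; unfold sdiff, sinter, scompl; tauto.
Qed.

Lemma prod_algebra_is_algebra {X : Type} (A : pset (pset X)) :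
  is_algebra (prod_algebra A).
Proof.
  split; [| split; [| split]].
  - intros F HF _; apply HF.
  - intros F HF _; apply HF.
  - intros B C HB HC F HF Hr; apply HF; [apply HB | apply HC]; assumption.
  - intros B HB F HF Hr; apply HF, HB; assumption.
Qed.

Lemma prod_algebra_rect {X : Type} (A : pset (pset X)) B1 B2 :
  A B1 -> A B2 -> prod_algebra A (rect B1 B2).
Proof. intros H1 H2 F _ Hr; auto. Qed.

Section FinAddMeasure.

Variables (T : Type) (F : pset (pset T)) (m : pset T -> R).
Hypotheses (HF : is_algebra F) (Hm : fin_add_measure F m).

Lemma fin_add_measure_union_null B C :
  F B -> F C -> sdisjoint B C -> m C = 0 -> m (sunion B C) = m B.
Proof.
  intros HB HC Hdisj HC0; destruct Hm as [_ [_ Hadd]].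
  rewrite Hadd, HC0 by assumption; lra.
Qed.

Lemma fin_add_measure_mono B C : F B -> F C -> ssubset B C -> m B <= m C.
Proof.
  intros HB HC Hsub; destruct Hm as [Hnn [_ Hadd]].
  assert (HCB : F (sdiff C B)) by (apply algebra_diff; assumption).
  replace C with (sunion B (sdiff C B)).
  - rewrite Hadd; [| assumption | assumption | intros x hB [_ hnB]; exact (hnB hB)].
    pose proof (Hnn _ HCB); lra.
  - apply pset_ext; intro x; unfold sunion, sdiff; split.
    + intros [h | [h _]]; auto.
    + intro h; destruct (classic (B x)); tauto.
Qed.

Lemma fin_add_measure_null_sub B C : F B -> F C -> ssubset B C -> m C = 0 -> m B = 0.
Proof.
  intros HB HC Hsub HC0; destruct Hm as [Hnn _].
  pose proof (fin_add_measure_mono B C HB HC Hsub); pose proof (Hnn B HB); lra.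
Qed.

End FinAddMeasure.

Lemma preimage_range_diff {X : Type} (f : X -> X) (S : pset X) :
  (forall x, S (f x)) -> sdiff (preimage f S) S = scompl S.
Proof.
  intro Hf; apply pset_ext; intro x; unfold sdiff, preimage, scompl; firstorder.
Qed.

Lemma preimage_range_compl {X : Type} (f : X -> X) (S : pset X) :
  (forall x, S (f x)) -> preimage f (scompl S) = sempty.
Proof.
  intro Hf; apply pset_ext; intro x; unfold preimage, scompl, sempty; firstorder.
Qed.

Lemma preimage_fixed_split {X : Type} (f : X -> X) (S B : pset X) :
  (forall r, S r -> f r = r) -> ssubset B S ->
  preimage f B = sunion B (sdiff (preimage f B) B).
Proof.
  intros Hfix HB; apply pset_ext; intro x; unfold preimage, sunion, sdiff; split.
  - intro h; destruct (classic (B x)); tauto.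
  - intros [h | [h _]]; [rewrite Hfix by auto |]; assumption.
Qed.

Section DecoupledModel.

Variables (X : Type) (A : pset (pset X)) (mu : pset X -> R)
  (mu2 : pset (X * X) -> R) (Rs : pset X) (Pi : X -> X) (G : pset (X * X))
  (eta : R).

Local Notation M := (prod_algebra A).
Local Notation row B := (sinter (rect B sfull) G).

Hypotheses (HA : is_algebra A) (Hmu2 : fin_add_measure M mu2)
  (Hprod : forall B1 B2, A B1 -> A B2 -> mu2 (rect B1 B2) = mu B1 * mu B2)
  (HR : A Rs) (HG : M G)
  (HPi_range : forall x, Rs (Pi x)) (HPi_fix : forall r, Rs r -> Pi r = r)
  (HPi_meas : forall B, A B -> ssubset B Rs -> A (preimage Pi B))
  (HIII : forall B, A B -> mu2 (row B) = mu B + eta * mu2 (row (preimage Pi B)))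
  (Hdec : forall B, A B -> ssubset B Rs -> mu2 (row (sdiff (preimage Pi B) B)) = 0).

Let HM : is_algebra M := prod_algebra_is_algebra A.
Let HAfull : A sfull := proj1 (proj2 HA).
Let HRc : A (scompl Rs) := proj2 (proj2 (proj2 HA)) Rs HR.

Lemma inter_G_meas B1 B2 : A B1 -> A B2 -> M (sinter (rect B1 B2) G).
Proof. intros; apply algebra_inter; [| apply prod_algebra_rect |]; assumption. Qed.

Lemma row_compl_R_null : mu2 (row (scompl Rs)) = 0.
Proof.
  rewrite <- (preimage_range_diff Pi Rs HPi_range).
  apply Hdec; [assumption | intros x h; exact h].
Qed.

Lemma mu_compl_R_null : mu (scompl Rs) = 0.
Proof.
  pose proof (HIII (scompl Rs) HRc) as H.
  rewrite (preimage_range_compl Pi Rs HPi_range), row_compl_R_null in H.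
  replace (row sempty) with (@sempty (X * X)) in H
    by (apply pset_ext; intro p; unfold sinter, rect, sempty; tauto).
  destruct Hmu2 as [_ [H0 _]]; rewrite H0 in H; lra.
Qed.

Lemma sub_col_compl_R_null S :
  M S -> ssubset S (rect sfull (scompl Rs)) -> mu2 S = 0.
Proof.
  intros HS Hsub.
  apply (fin_add_measure_null_sub _ M mu2 HM Hmu2 S (rect sfull (scompl Rs)));
    [assumption | apply prod_algebra_rect; assumption | assumption |].
  rewrite Hprod, mu_compl_R_null by assumption; lra.
Qed.

Lemma G_off_RxR_null : mu2 (sdiff G (rect Rs Rs)) = 0.
Proof.
  assert (Hsplit : sdiff G (rect Rs Rs) =
            sunion (sinter (rect Rs (scompl Rs)) G) (row (scompl Rs))).
  { apply pset_ext; intros [a b]; unfold sunion, sinter, rect, scompl, sdiff, sfull; simpl.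
    split.
    - intros [g h]; destruct (classic (Rs a)); tauto.
    - intros [[[h h'] g] | [[h _] g]]; tauto. }
  rewrite Hsplit, (fin_add_measure_union_null _ M mu2 Hmu2).
  - apply sub_col_compl_R_null; [apply inter_G_meas; assumption |].
    intros [a b] [[_ h] _]; split; [exact I | exact h].
  - apply inter_G_meas; assumption.
  - apply inter_G_meas; assumption.
  - intros [a b] [[h _] _] [[h' _] _]; auto.
  - exact row_compl_R_null.
Qed.

Lemma row_restrict_RxR B :
  A B -> ssubset B Rs -> mu2 (row B) = mu2 (sinter (rect B Rs) (sinter G (rect Rs Rs))).
Proof.
  intros HB HBR.
  assert (Hsplit : row B = sunion (sinter (rect B Rs) (sinter G (rect Rs Rs)))
                                  (sinter (rect B (scompl Rs)) G)).
  { apply pset_ext; intros [a b]; unfold sunion, sinter, rect, scompl, sfull; simpl.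
    split.
    - intros [[h _] g]; destruct (classic (Rs b)); [left | right]; firstorder.
    - intros [[[h1 _] [g _]] | [[h _] g]]; tauto. }
  rewrite Hsplit, (fin_add_measure_union_null _ M mu2 Hmu2).
  - reflexivity.
  - apply algebra_inter; [exact HM | apply prod_algebra_rect; assumption |].
    apply algebra_inter; [exact HM | exact HG | apply prod_algebra_rect; assumption].
  - apply inter_G_meas; assumption.
  - intros [a b] [[_ h] _] [[_ h'] _]; auto.
  - apply sub_col_compl_R_null; [apply inter_G_meas; assumption |].
    intros [a b] [[_ h] _]; split; [exact I | exact h].
Qed.

Lemma row_preimage B : A B -> ssubset B Rs -> mu2 (row (preimage Pi B)) = mu2 (row B).
Proof.
  intros HB HBR.
  assert (HPB : A (preimage Pi B)) by auto.
  assert (Hsplit : row (preimage Pi B) = sunion (row B) (row (sdiff (preimage Pi B) B))).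
  { rewrite (preimage_fixed_split Pi Rs B HPi_fix HBR) at 1.
    apply pset_ext; intros p; unfold sunion, sinter, rect; tauto. }
  rewrite Hsplit, (fin_add_measure_union_null _ M mu2 Hmu2).
  - reflexivity.
  - apply inter_G_meas; assumption.
  - apply inter_G_meas; [apply algebra_diff |]; assumption.
  - intros p [[h _] _] [[[_ h'] _] _]; auto.
  - apply Hdec; assumption.
Qed.

Lemma row_mass B : eta < 1 -> A B -> ssubset B Rs -> mu2 (row B) = mu B / (1 - eta).
Proof.
  intros Heta HB HBR.
  pose proof (HIII B HB) as H; rewrite row_preimage in H by assumption.
  apply (Rmult_eq_reg_r (1 - eta)); [| lra].
  unfold Rdiv; rewrite Rmult_assoc, Rinv_l by lra; lra.
Qed.

End DecoupledModel.

Theorem theorem4p14 (X : Type) (x0 : X) (A : pset (pset X)) (mu : pset X -> R)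
  (mu2 : pset (X * X) -> R) (Rs Is : pset X) (Pi : X -> X) (G : pset (X * X))
  (E0 eta : R) :
  admissible_structural_model A mu mu2 Rs Is Pi G E0 eta ->
  eta < 1 ->
  (forall B, A B -> ssubset B Rs ->
     mu2 (sinter (rect (sdiff (preimage Pi B) B) sfull) G) = 0) ->
  (mu2 (sdiff G (rect Rs Rs)) = 0 /\
   (forall B, A B -> ssubset B Rs ->
      mu2 (sinter (rect B sfull) G) =
      mu2 (sinter (rect B Rs) (sinter G (rect Rs Rs))))) /\
  (forall B, A B -> ssubset B Rs ->
     mu2 (sinter (rect B sfull) G) = mu B / (1 - eta)).
Proof.
  intros [[HA [_ [Hmu2 [Hprod [HR [_ [_ [HPi_range [HG _]]]]]]]]]
          [[_ [HPi_fix HPi_meas]] [_ [_ [_ HIII]]]]] Heta Hdec.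
  split; [split |].
  - eapply G_off_RxR_null; eassumption.
  - intros B HB HBR; eapply row_restrict_RxR; eassumption.
  - intros B HB HBR; eapply row_mass; eassumption.
Qed.
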